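(* Let $n\in\mathbb N$, $\varphi_1\in C_0^{[n/2]+2}(\mathbb R^n)$, and $\psi(x,t)=\frac32\int_0^1 v_{\varphi_1}(x,3t^{1/3}s)(1-s^2)\,ds$ for $x\in\mathbb R^n$, $t>0$. Then \[ \psi_{tt}-t^{-4/3}\Delta\psi+2t^{-1}\psi_t=0\quad(t>0,\ x\in\mathbb R^n),\qquad \lim_{t\to0}t\psi(x,t)=0,\quad \lim_{t\to0}\big(t\psi_t(x,t)+\psi(x,t)\big)=\varphi_1(x). \]
   Context: $\Delta=\sum_{i=1}^n\partial_{x_i}^2$, $[n/2]$ is the integer part of $n/2$. For $\varphi=\varphi(x)$, $v_\varphi(x,r)$ denotes the solution $v$ of the free wave equation $v_{rr}-\Delta v=0$, $v(x,0)=\varphi(x)$, $v_r(x,0)=0$, evaluated at time $r$. *)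

From Stdlib Require Import Reals.
From Stdlib Require Fin.
Open Scope R_scope.

Definition Rn (n : nat) := Fin.t n -> R.

Definition setc {n : nat} (x : Rn n) (i : Fin.t n) (s : R) : Rn n :=
  fun j => if Fin.eq_dec i j then s else x j.

Fixpoint fsum (n : nat) : (Fin.t n -> R) -> R :=
  match n with
  | O => fun _ => 0
  | S m => fun f => f (@Fin.F1 m) + fsum m (fun i => f (Fin.FS i))
  end.

Definition cont_Rn {n : nat} (f : Rn n -> R) : Prop :=
  forall x eps, 0 < eps -> exists delta, 0 < delta /\
    forall y, (forall j, Rabs (y j - x j) < delta) -> Rabs (f y - f x) < eps.

Fixpoint Ck {n : nat} (k : nat) (f : Rn n -> R) : Prop :=
  cont_Rn f /\
  match k with
  | O => True
  | S k' => forall i, exists g : Rn n -> R,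
      (forall x, derivable_pt_lim (fun s => f (setc x i s)) (x i) (g x)) /\ Ck k' g
  end.

Definition has_compact_support {n : nat} (f : Rn n -> R) : Prop :=
  exists M, forall x, f x <> 0 -> forall j, Rabs (x j) <= M.

Definition C0k {n : nat} (k : nat) (f : Rn n -> R) : Prop :=
  Ck k f /\ has_compact_support f.

Definition jcont {n : nat} (F : Rn n -> R -> R) : Prop :=
  forall x r eps, 0 < eps -> exists delta, 0 < delta /\
    forall y q, (forall j, Rabs (y j - x j) < delta) -> Rabs (q - r) < delta ->
      Rabs (F y q - F x r) < eps.

Fixpoint CkT {n : nat} (k : nat) (F : Rn n -> R -> R) : Prop :=
  jcont F /\
  match k with
  | O => True
  | S k' =>
      (exists G : Rn n -> R -> R,
         (forall x r, derivable_pt_lim (fun q => F x q) r (G x r)) /\ CkT k' G) /\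
      (forall i, exists G : Rn n -> R -> R,
         (forall x r, derivable_pt_lim (fun s => F (setc x i s) r) (x i) (G x r))
         /\ CkT k' G)
  end.

Definition is_wave_solution {n : nat} (phi : Rn n -> R) (v : Rn n -> R -> R) : Prop :=
  CkT 2 v /\
  (forall x, v x 0 = phi x) /\
  exists (vr vrr : Rn n -> R -> R) (d1 d2 : Fin.t n -> Rn n -> R -> R),
    (forall x r,
       derivable_pt_lim (fun q => v x q) r (vr x r) /\
       derivable_pt_lim (fun q => vr x q) r (vrr x r) /\
       (forall i,
          derivable_pt_lim (fun s => v (setc x i s) r) (x i) (d1 i x r) /\
          derivable_pt_lim (fun s => d1 i (setc x i s) r) (x i) (d2 i x r)) /\
       vrr x r - fsum n (fun i => d2 i x r) = 0) /\
    (forall x, vr x 0 = 0).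

From Stdlib Require Import Reals Lra FunctionalExtensionality.
From Coquelicot Require Import Coquelicot.
Open Scope R_scope.

(* Write tau(t) = 3 t^(1/3) and, for a profile w : R -> R, the moments
     mom w k T = int_0^1 w(T s) s^k (1 - s^2) ds,
   so that psi(x,t) = 3/2 mom (v x) 0 (tau t).  The proof has four parts.
   1. Differentiation under the integral sign (Coquelicot's parametric
      integrals) gives d/dT mom w k = mom w' (k+1) and lets spatial
      derivatives pass under the integral; the Laplacian of psi is then
      3/2 mom (v_rr x) 0 (tau t) by the wave equation.
   2. Integrating s |-> ((1 - s^2)^2 w(T s))' over [0,1] gives, when w(0) = 0,
      T (mom w' 0 T - mom w' 2 T) = 4 mom w 1 T; applied to w = v_r(x,.)
      (which vanishes at 0) this is exactly the identity that makes the
      Euler-Poisson-Darboux equation for psi hold, after the chain rule in t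
      and the algebra of the powers t^(k/3).
   3. Both limits are of the form h(tau t) with h continuous at 0, since
      t = (tau t / 3)^3 and t tau'(t) = tau t / 3; moments are continuous
      because they are differentiable, and mom w k 0 = w(0) int_0^1 s^k (1 - s^2).
   4. The joint continuity of the derivatives of v needed above is extracted
      from the C^2 hypothesis on the wave solution. *)

Lemma continuity_2d_pt_section (F : R -> R -> R) p s :
  continuity_2d_pt F p s -> continuity_pt (F p) s.
Proof.
  intros HF eps Heps. destruct (HF (mkposreal eps Heps)) as [d Hd].
  exists d. split; [apply cond_pos |]. intros u [_ Hu].
  apply Hd; [| exact Hu]. rewrite Rminus_diag, Rabs_R0. apply cond_pos.
Qed.

Lemma continuity_2d_pt_comp (g : R -> R) (A : R -> R -> R) p s :
  continuity_pt g (A p s) -> continuity_2d_pt A p s ->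
  continuity_2d_pt (fun u v => g (A u v)) p s.
Proof.
  intros Hg HA. apply continuity_2d_pt_filterlim.
  apply (filterlim_comp _ _ _ (fun z => A (fst z) (snd z)) g _ (locally (A p s))).
  - now apply continuity_2d_pt_filterlim.
  - now apply continuity_pt_filterlim.
Qed.

Lemma derivable_pt_lim_RInt_param (F G : R -> R -> R) (a b p : R) :
  (forall y s, derivable_pt_lim (fun z => F z s) y (G y s)) ->
  (forall y, continuity (F y)) ->
  (forall s, Rmin a b <= s <= Rmax a b -> continuity_2d_pt G p s) ->
  derivable_pt_lim (fun y => RInt (F y) a b) p (RInt (G p) a b).
Proof.
  intros HF HFc HG.
  assert (HD : forall y s, Derive (fun z => F z s) y = G y s).
  { intros y s. apply is_derive_unique, is_derive_Reals, HF. }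
  apply is_derive_Reals.
  replace (RInt (G p) a b) with (RInt (fun s => Derive (fun z => F z s) p) a b)
    by (apply RInt_ext; intros; apply HD).
  apply is_derive_RInt_param.
  - apply filter_forall; intros y s _. exists (G y s). apply is_derive_Reals, HF.
  - intros s Hs. apply (continuity_2d_pt_ext G); [intros; now rewrite HD | now apply HG].
  - apply filter_forall; intros y.
    apply (ex_RInt_continuous (V := R_CompleteNormedModule)); intros s _.
    apply continuity_pt_filterlim, HFc.
Qed.

Lemma RInt_FTC (f f' : R -> R) a b :
  (forall x, derivable_pt_lim f x (f' x)) -> continuity f' -> RInt f' a b = f b - f a.
Proof.
  intros Hf Hf'. apply is_RInt_unique, (is_RInt_derive (V := R_CompleteNormedModule)).
  - intros x _. apply is_derive_Reals, Hf.
  - intros x _. apply continuity_pt_filterlim, Hf'.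
Qed.

Lemma continuity_of_derivative (w w' : R -> R) :
  (forall r, derivable_pt_lim w r (w' r)) -> continuity w.
Proof. intros Hw r. apply derivable_continuous_pt. exists (w' r). apply Hw. Qed.

Lemma derivable_pt_lim_mult_const f x l c :
  derivable_pt_lim f x l -> derivable_pt_lim (fun x => f x * c) x (l * c).
Proof.
  intros Hf. apply is_derive_Reals. apply is_derive_Reals in Hf.
  apply (is_derive_scal_l (fun x => f x) x l c Hf).
Qed.

Lemma derivable_pt_lim_scaled (w : R -> R) (dw : R) s c T :
  derivable_pt_lim w (T * s) dw ->
  derivable_pt_lim (fun T => w (T * s) * c) T (dw * s * c).
Proof.
  intros Hw. apply is_derive_Reals. apply is_derive_Reals in Hw.
  assert (HD : Derive (fun x : R => w x) (T * s) = dw) by now apply is_derive_unique.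
  auto_derive; [now exists dw | rewrite HD; ring].
Qed.

Definition wgt (k : nat) (s : R) : R := s ^ k * (1 - s ^ 2).

Definition mom (w : R -> R) (k : nat) (T : R) : R :=
  RInt (fun s => w (T * s) * wgt k s) 0 1.

Lemma continuity_wgt k : continuity (wgt k).
Proof. unfold wgt. reg. Qed.

Lemma continuity_2d_pt_scaled (w : R -> R) k T s :
  continuity w -> continuity_2d_pt (fun T s => w (T * s) * wgt k s) T s.
Proof.
  intros Hw. apply continuity_2d_pt_mult.
  - apply (continuity_2d_pt_comp w (fun u v => u * v)); [apply Hw |].
    apply continuity_2d_pt_mult; [apply continuity_2d_pt_id1 | apply continuity_2d_pt_id2].
  - apply (continuity_2d_pt_comp (wgt k) (fun _ v => v));
      [apply continuity_wgt | apply continuity_2d_pt_id2].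
Qed.

Lemma continuity_scaled (w : R -> R) k T :
  continuity w -> continuity (fun s => w (T * s) * wgt k s).
Proof.
  intros Hw s.
  apply (continuity_2d_pt_section (fun T s => w (T * s) * wgt k s)), continuity_2d_pt_scaled, Hw.
Qed.

Lemma ex_RInt_scaled (w : R -> R) k T :
  continuity w -> ex_RInt (fun s => w (T * s) * wgt k s) 0 1.
Proof.
  intros Hw. apply (ex_RInt_continuous (V := R_CompleteNormedModule)); intros s _.
  apply continuity_pt_filterlim, continuity_scaled, Hw.
Qed.

Lemma mom_derivable (w w' : R -> R) k T :
  (forall r, derivable_pt_lim w r (w' r)) -> continuity w' ->
  derivable_pt_lim (mom w k) T (mom w' (S k) T).
Proof.
  intros Hw Hw'. unfold mom.
  apply (derivable_pt_lim_RInt_param (fun T s => w (T * s) * wgt k s)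
           (fun T s => w' (T * s) * wgt (S k) s)).
  - intros y s. replace (w' (y * s) * wgt (S k) s) with (w' (y * s) * s * wgt k s)
      by (unfold wgt; simpl; ring).
    apply derivable_pt_lim_scaled, Hw.
  - intros y. apply continuity_scaled. now apply (continuity_of_derivative w w').
  - intros s _. now apply continuity_2d_pt_scaled.
Qed.

Lemma mom_continuity (w w' : R -> R) k T :
  (forall r, derivable_pt_lim w r (w' r)) -> continuity w' -> continuity_pt (mom w k) T.
Proof.
  intros Hw Hw'. apply derivable_continuous_pt.
  exists (mom w' (S k) T). now apply mom_derivable.
Qed.

Lemma mom_at_0 (w : R -> R) k : mom w k 0 = w 0 * RInt (wgt k) 0 1.
Proof.
  unfold mom. rewrite <- (RInt_scal (V := R_CompleteNormedModule)).
  - apply RInt_ext. intros s _. now rewrite Rmult_0_l.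
  - apply (ex_RInt_continuous (V := R_CompleteNormedModule)); intros s _.
    apply continuity_pt_filterlim, continuity_wgt.
Qed.

Lemma RInt_wgt_0 : RInt (wgt 0) 0 1 = 2 / 3.
Proof.
  rewrite (RInt_FTC (fun s => s - s ^ 3 / 3)).
  - simpl. field.
  - intros s. apply is_derive_Reals. auto_derive; [easy | unfold wgt; simpl; field].
  - apply continuity_wgt.
Qed.

(* The integration by parts identity behind the equation for psi: the
   boundary terms of (1 - s^2)^2 w(T s) vanish at s = 1 and, since w 0 = 0,
   at s = 0. *)
Lemma mom_ibp (w w' : R -> R) T :
  (forall r, derivable_pt_lim w r (w' r)) -> continuity w' -> w 0 = 0 ->
  T * (mom w' 0 T - mom w' 2 T) = 4 * mom w 1 T.
Proof.
  intros Hw Hw' Hw0.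
  pose (g := fun s => (1 - s ^ 2) ^ 2 * w (T * s)).
  pose (g' := fun s => -4 * (w (T * s) * wgt 1 s)
                       + T * (w' (T * s) * wgt 0 s - w' (T * s) * wgt 2 s)).
  assert (Hw_c := continuity_of_derivative w w' Hw).
  assert (Hlin : is_RInt g' 0 1 (-4 * mom w 1 T + T * (mom w' 0 T - mom w' 2 T))).
  { change (is_RInt g' 0 1
      (plus (scal (-4) (mom w 1 T)) (scal T (minus (mom w' 0 T) (mom w' 2 T))))).
    apply (is_RInt_plus (V := R_NormedModule)); apply (is_RInt_scal (V := R_NormedModule));
      [| apply (is_RInt_minus (V := R_NormedModule))];
      apply (RInt_correct (V := R_CompleteNormedModule));
      now apply ex_RInt_scaled. }
  assert (Hftc : RInt g' 0 1 = g 1 - g 0).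
  { apply RInt_FTC.
    - intros s. apply is_derive_Reals. unfold g, g', wgt.
      assert (HD : Derive (fun x : R => w x) (T * s) = w' (T * s))
        by now apply is_derive_unique, is_derive_Reals.
      auto_derive; [now exists (w' (T * s)); apply is_derive_Reals | rewrite HD; ring].
    - intros s. unfold g'.
      apply (continuity_pt_plus (fun s => -4 * (w (T * s) * wgt 1 s))
               (fun s => T * (w' (T * s) * wgt 0 s - w' (T * s) * wgt 2 s)));
      apply continuity_pt_scal; [| apply continuity_pt_minus];
      now apply continuity_scaled. }
  apply (is_RInt_unique (V := R_CompleteNormedModule)) in Hlin.
  unfold g in Hftc. rewrite Hlin, Rmult_0_r, Hw0 in Hftc. simpl in Hftc. lra.
Qed.

Lemma mom_plus (f g : R -> R) k T :
  continuity f -> continuity g -> mom (fun r => f r + g r) k T = mom f k T + mom g k T.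
Proof.
  intros Hf Hg. unfold mom.
  rewrite <- (RInt_plus (V := R_CompleteNormedModule)) by now apply ex_RInt_scaled.
  apply RInt_ext. intros s _. cbn. ring.
Qed.

Lemma fsum_mull n (f : Fin.t n -> R) c : fsum n (fun i => c * f i) = c * fsum n f.
Proof. induction n; simpl; [ring |]. rewrite (IHn (fun i => f (Fin.FS i))). ring. Qed.

Lemma continuity_fsum n (f : Fin.t n -> R -> R) :
  (forall i, continuity (f i)) -> continuity (fun r => fsum n (fun i => f i r)).
Proof.
  induction n; intros Hf; simpl; [apply continuity_const; now intros ? ? |].
  apply (continuity_plus (f Fin.F1) (fun r => fsum n (fun i => f (Fin.FS i) r)));
    [apply Hf | apply (IHn (fun i => f (Fin.FS i))); intros; apply Hf].
Qed.

Lemma mom_fsum n (f : Fin.t n -> R -> R) k T :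
  (forall i, continuity (f i)) ->
  fsum n (fun i => mom (f i) k T) = mom (fun r => fsum n (fun i => f i r)) k T.
Proof.
  induction n; intros Hf; simpl.
  - unfold mom. rewrite <- (RInt_ext (fun _ => 0)) by (intros; cbn; ring).
    rewrite RInt_const. cbn. ring.
  - rewrite (IHn (fun i => f (Fin.FS i))) by (intros; apply Hf).
    rewrite mom_plus; [reflexivity | apply Hf |].
    apply (continuity_fsum n (fun i => f (Fin.FS i))). intros; apply Hf.
Qed.

Lemma setc_same {n} (x : Rn n) i : setc x i (x i) = x.
Proof.
  apply functional_extensionality; intros j. unfold setc.
  destruct Fin.eq_dec; now subst.
Qed.

Lemma setc_setc {n} (x : Rn n) i a b : setc (setc x i a) i b = setc x i b.
Proof.
  apply functional_extensionality; intros j. unfold setc. now destruct Fin.eq_dec.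
Qed.

Lemma setc_at {n} (x : Rn n) i a : setc x i a i = a.
Proof. unfold setc. now destruct Fin.eq_dec. Qed.

Lemma setc_dist {n} (x : Rn n) i a b j :
  Rabs (setc x i a j - setc x i b j) <= Rabs (a - b).
Proof.
  unfold setc. destruct Fin.eq_dec; [lra |].
  rewrite Rminus_diag, Rabs_R0. apply Rabs_pos.
Qed.

Lemma derivable_pt_lim_setc {n} (W D : Rn n -> R -> R) x i q r :
  (forall X r, derivable_pt_lim (fun s => W (setc X i s) r) (X i) (D X r)) ->
  derivable_pt_lim (fun s => W (setc x i s) r) q (D (setc x i q) r).
Proof.
  intros HD. specialize (HD (setc x i q) r). rewrite setc_at in HD.
  replace (fun s => W (setc x i s) r) with (fun s => W (setc (setc x i q) i s) r);
    [exact HD |].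
  apply functional_extensionality; intros s. now rewrite setc_setc.
Qed.

Lemma jcont_continuity {n} (W : Rn n -> R -> R) x : jcont W -> continuity (W x).
Proof.
  intros HW r eps Heps. destruct (HW x r eps Heps) as [d [Hd HWd]].
  exists d. split; [exact Hd |]. intros q [_ Hq].
  apply HWd; [| exact Hq]. intros j. rewrite Rminus_diag, Rabs_R0. exact Hd.
Qed.

Lemma continuity_2d_pt_setc {n} (W : Rn n -> R -> R) x i (A : R -> R -> R) p s :
  jcont W -> continuity_2d_pt A p s ->
  continuity_2d_pt (fun y u => W (setc x i y) (A y u)) p s.
Proof.
  intros HW HA eps.
  destruct (HW (setc x i p) (A p s) eps (cond_pos eps)) as [d1 [Hd1 H1]].
  destruct (HA (mkposreal d1 Hd1)) as [d2 H2]. simpl in H2.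
  assert (Hd : 0 < Rmin d1 d2) by (apply Rmin_glb_lt; [lra | apply cond_pos]).
  exists (mkposreal _ Hd). simpl. intros y u Hy Hu.
  pose proof (Rmin_l d1 d2). pose proof (Rmin_r d1 d2).
  apply H1; [| apply H2; lra].
  intros j. eapply Rle_lt_trans; [apply setc_dist | lra].
Qed.

Lemma continuity_2d_pt_setc_scaled {n} (W : Rn n -> R -> R) x i k T p s :
  jcont W -> continuity_2d_pt (fun y u => W (setc x i y) (T * u) * wgt k u) p s.
Proof.
  intros HW. apply continuity_2d_pt_mult.
  - apply (continuity_2d_pt_setc W x i (fun _ u => T * u)); [exact HW |].
    apply continuity_2d_pt_mult; [apply continuity_2d_pt_const | apply continuity_2d_pt_id2].
  - apply (continuity_2d_pt_comp (wgt k) (fun _ v => v));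
      [apply continuity_wgt | apply continuity_2d_pt_id2].
Qed.

Lemma mom_derivable_setc {n} (W D : Rn n -> R -> R) x i k T :
  jcont W -> jcont D ->
  (forall X r, derivable_pt_lim (fun s => W (setc X i s) r) (X i) (D X r)) ->
  derivable_pt_lim (fun y => mom (W (setc x i y)) k T) (x i) (mom (D x) k T).
Proof.
  intros HW HDc HD.
  replace (mom (D x) k T) with (mom (D (setc x i (x i))) k T) by now rewrite setc_same.
  apply (derivable_pt_lim_RInt_param (fun y s => W (setc x i y) (T * s) * wgt k s)
           (fun y s => D (setc x i y) (T * s) * wgt k s)).
  - intros y s. apply derivable_pt_lim_mult_const. now apply derivable_pt_lim_setc.
  - intros y s.
    apply (continuity_2d_pt_section (fun y s => W (setc x i y) (T * s) * wgt k s)).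
    now apply continuity_2d_pt_setc_scaled.
  - intros s _. now apply continuity_2d_pt_setc_scaled.
Qed.

Definition tau (t : R) : R := 3 * Rpower t (1/3).
Definition tau1 (t : R) : R := Rpower t (-2/3).
Definition tau2 (t : R) : R := -2/3 * Rpower t (-5/3).

Lemma Rpower_thirds t k : 0 < t -> Rpower t (INR k / 3) = Rpower t (1/3) ^ k.
Proof.
  intros Ht. rewrite <- Rpower_pow by (unfold Rpower; apply exp_pos).
  rewrite Rpower_mult. f_equal. field.
Qed.

Lemma Rpower_neg_thirds t k : 0 < t -> Rpower t (- (INR k / 3)) = / Rpower t (1/3) ^ k.
Proof. intros Ht. now rewrite Rpower_Ropp, Rpower_thirds. Qed.

Lemma cbrt_cube t : 0 < t -> Rpower t (1/3) ^ 3 = t.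
Proof.
  intros Ht. rewrite <- Rpower_thirds by exact Ht.
  replace (INR 3 / 3) with 1 by (simpl; field). now apply Rpower_1.
Qed.

Lemma t_tau1 t : 0 < t -> t * tau1 t = tau t / 3.
Proof.
  intros Ht. unfold tau1, tau. rewrite <- (Rpower_1 t) at 1 by exact Ht.
  rewrite <- Rpower_plus. replace (1 + -2/3) with (1/3) by field. field.
Qed.

Lemma tau_derivable t : 0 < t -> derivable_pt_lim tau t (tau1 t).
Proof.
  intros Ht. unfold tau, tau1.
  replace (Rpower t (-2/3)) with (3 * (1/3 * Rpower t (1/3 - 1)))
    by (replace (1/3 - 1) with (-2/3) by field; field).
  apply derivable_pt_lim_scal, derivable_pt_lim_power, Ht.
Qed.

Lemma tau1_derivable t : 0 < t -> derivable_pt_lim tau1 t (tau2 t).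
Proof.
  intros Ht. unfold tau1, tau2.
  replace (-5/3) with (-2/3 - 1) by field.
  apply derivable_pt_lim_power, Ht.
Qed.

Lemma mom_tau_derivable (w w' : R -> R) k t :
  (forall r, derivable_pt_lim w r (w' r)) -> continuity w' -> 0 < t ->
  derivable_pt_lim (fun t => mom w k (tau t)) t (mom w' (S k) (tau t) * tau1 t).
Proof.
  intros Hw Hw' Ht.
  apply (derivable_pt_lim_comp tau (mom w k)); [now apply tau_derivable |].
  now apply mom_derivable.
Qed.

(* Since tau t -> 0 as t -> 0+, a function of tau t continuous at 0 has a limit. *)
Lemma limit_through_tau (f h : R -> R) (L : R) :
  continuity_pt h 0 -> h 0 = L -> (forall t, 0 < t -> f t = h (tau t)) ->
  limit1_in f (fun t => 0 < t) L 0.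
Proof.
  intros Hh <- Hf eps Heps.
  destruct (Hh eps Heps) as [d [Hd Hhd]].
  exists ((d / 3) ^ 3). split; [apply pow_lt; lra |].
  intros t [Ht Htd]. simpl in Htd |- *. unfold R_dist in Htd |- *.
  rewrite Rminus_0_r, Rabs_pos_eq in Htd by lra.
  assert (Htau : 0 < tau t) by (unfold tau, Rpower; pose proof (exp_pos (1/3 * ln t)); lra).
  assert (Hsmall : tau t < d).
  { unfold tau. replace d with (3 * Rpower ((d / 3) ^ 3) (1/3)).
    - apply Rmult_lt_compat_l; [lra |]. apply Rlt_Rpower_l; lra.
    - rewrite <- Rpower_pow, Rpower_mult by lra. simpl.
      replace ((1 + 1 + 1) * (1 / 3)) with 1 by field. rewrite Rpower_1; lra. }
  rewrite Hf by exact Ht. apply Hhd. split.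
  - split; [exact I | lra].
  - simpl. unfold R_dist. rewrite Rminus_0_r, Rabs_pos_eq; lra.
Qed.

Lemma derivable_pt_lim_ext_pos (f g : R -> R) t l :
  (forall s, 0 < s -> f s = g s) -> 0 < t ->
  derivable_pt_lim g t l -> derivable_pt_lim f t l.
Proof.
  intros Hfg Ht Hg. apply is_derive_Reals. apply is_derive_Reals in Hg.
  apply (is_derive_ext_loc g); [| exact Hg].
  exists (mkposreal t Ht). intros s Hs. symmetry. apply Hfg.
  change (Rabs (s - t) < t) in Hs. apply Rabs_def2 in Hs. lra.
Qed.

Lemma limit1_in_ext_pos (f g : R -> R) L a :
  (forall t, 0 < t -> f t = g t) ->
  limit1_in g (fun t => 0 < t) L a -> limit1_in f (fun t => 0 < t) L a.
Proof.
  intros Hfg Hg eps Heps. destruct (Hg eps Heps) as [d [Hd Hgd]].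
  exists d. split; [exact Hd |]. intros t [Ht Htd]. rewrite Hfg by exact Ht.
  now apply Hgd.
Qed.

(* The derivatives of a classical solution of the free wave equation that the
   proof uses, with the joint continuity coming from v being C^2. *)
Record wave_regular {n} (v vr vrr : Rn n -> R -> R)
    (d1 d2 : Fin.t n -> Rn n -> R -> R) : Prop := {
  deriv_v_r : forall x r, derivable_pt_lim (v x) r (vr x r);
  deriv_vr_r : forall x r, derivable_pt_lim (vr x) r (vrr x r);
  deriv_v_i : forall i X r, derivable_pt_lim (fun s => v (setc X i s) r) (X i) (d1 i X r);
  deriv_d1_i :
    forall i X r, derivable_pt_lim (fun s => d1 i (setc X i s) r) (X i) (d2 i X r);
  wave_eq : forall x r, fsum n (fun i => d2 i x r) = vrr x r;
  vr_at_0 : forall x, vr x 0 = 0;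
  cont_v : jcont v;
  cont_vr : jcont vr;
  cont_vrr : jcont vrr;
  cont_d1 : forall i, jcont (d1 i);
  cont_d2 : forall i, jcont (d2 i)
}.

Lemma jcont_ext {n} (F G : Rn n -> R -> R) :
  (forall x r, F x r = G x r) -> jcont F -> jcont G.
Proof.
  intros HFG HF. replace G with F; [exact HF |].
  apply functional_extensionality; intros x.
  apply functional_extensionality; intros r. apply HFG.
Qed.

(* The derivatives in is_wave_solution coincide with the C^2 witnesses, by
   uniqueness of derivatives, and hence are jointly continuous. *)
Lemma wave_solution_regular {n} (phi : Rn n -> R) v :
  is_wave_solution phi v -> exists vr vrr d1 d2, wave_regular v vr vrr d1 d2.
Proof.
  intros [[Jv [[Gr [HGr [JGr [[Grr [HGrr [JGrr _]]] _]]]] HGi]]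
          [_ [vr [vrr [d1 [d2 [Hw Hvr0]]]]]]].
  exists vr, vrr, d1, d2.
  assert (Evr : forall x r, Gr x r = vr x r)
    by (intros x r; eapply uniqueness_limite; [apply HGr | apply Hw]).
  assert (Evrr : forall x r, Grr x r = vrr x r).
  { intros x r. eapply uniqueness_limite; [apply HGrr |].
    replace (fun q => Gr x q) with (fun q => vr x q)
      by (apply functional_extensionality; intros; now rewrite Evr).
    apply Hw. }
  split; try (intros; apply Hw); try assumption.
  - intros x r. destruct (Hw x r) as [_ [_ [_ Heq]]]. lra.
  - now apply (jcont_ext Gr).
  - now apply (jcont_ext Grr).
  - intros i. destruct (HGi i) as [Gi [HGi' [JGi _]]].
    apply (jcont_ext Gi); [| exact JGi].
    intros x r. eapply uniqueness_limite; [apply HGi' | apply Hw].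
  - intros i. destruct (HGi i) as [Gi [HGi' [_ [_ HGii]]]].
    destruct (HGii i) as [Gii [HGii' [JGii _]]].
    apply (jcont_ext Gii); [| exact JGii].
    intros x r. eapply uniqueness_limite; [apply HGii' |].
    replace (fun s => Gi (setc x i s) r) with (fun s => d1 i (setc x i s) r)
      by (apply functional_extensionality; intros s;
          eapply uniqueness_limite; [apply Hw | apply HGi']).
    apply Hw.
Qed.

(* The algebra of the equation, in terms of u = t^(1/3): here
   M0 = mom v_rr 0, M1 = mom v_r 1, M2 = mom v_rr 2 at T = 3u, and the
   hypothesis is the integration by parts identity mom_ibp. *)
Lemma wave_average_algebra u M0 M1 M2 :
  0 < u -> 3 * u * (M0 - M2) = 4 * M1 ->
  3/2 * (M2 * / u ^ 2 * / u ^ 2 + M1 * (-2/3 * / u ^ 5))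
  - / u ^ 4 * (3/2 * M0) + 2 / u ^ 3 * (3/2 * (M1 * / u ^ 2)) = 0.
Proof.
  intros Hu Hibp.
  replace M0 with (M2 + 4 * M1 / (3 * u)) by (field_simplify_eq; lra).
  field. lra.
Qed.

(* For a regular wave solution v, Psi x t = 3/2 mom (v x) 0 (tau t) is the
   function psi of the theorem; Psi_t, Psi_tt, Psi_i, Psi_ii are its
   derivatives in t and in the i-th coordinate. *)
Section WaveAverage.

Context {n : nat} (v vr vrr : Rn n -> R -> R) (d1 d2 : Fin.t n -> Rn n -> R -> R).
Hypothesis Hv_r : forall x r, derivable_pt_lim (v x) r (vr x r).
Hypothesis Hvr_r : forall x r, derivable_pt_lim (vr x) r (vrr x r).
Hypothesis Hv_i : forall i X r, derivable_pt_lim (fun s => v (setc X i s) r) (X i) (d1 i X r).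
Hypothesis Hd1_i :
  forall i X r, derivable_pt_lim (fun s => d1 i (setc X i s) r) (X i) (d2 i X r).
Hypothesis Hwave : forall x r, fsum n (fun i => d2 i x r) = vrr x r.
Hypothesis Hvr_0 : forall x, vr x 0 = 0.
Hypotheses (Hv_c : jcont v) (Hvr_c : jcont vr) (Hvrr_c : jcont vrr).
Hypotheses (Hd1_c : forall i, jcont (d1 i)) (Hd2_c : forall i, jcont (d2 i)).

Definition Psi x t := 3/2 * mom (v x) 0 (tau t).
Definition Psi_t x t := 3/2 * (mom (vr x) 1 (tau t) * tau1 t).
Definition Psi_tt x t :=
  3/2 * (mom (vrr x) 2 (tau t) * tau1 t * tau1 t + mom (vr x) 1 (tau t) * tau2 t).
Definition Psi_i i x t := 3/2 * mom (d1 i x) 0 (tau t).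
Definition Psi_ii i x t := 3/2 * mom (d2 i x) 0 (tau t).

Lemma Psi_t_spec x t : 0 < t -> derivable_pt_lim (Psi x) t (Psi_t x t).
Proof.
  intros Ht. apply derivable_pt_lim_scal.
  apply mom_tau_derivable; [apply Hv_r | apply jcont_continuity, Hvr_c | exact Ht].
Qed.

Lemma Psi_tt_spec x t : 0 < t -> derivable_pt_lim (Psi_t x) t (Psi_tt x t).
Proof.
  intros Ht. apply derivable_pt_lim_scal.
  apply (derivable_pt_lim_mult (fun t => mom (vr x) 1 (tau t)) tau1).
  - apply mom_tau_derivable; [apply Hvr_r | apply jcont_continuity, Hvrr_c | exact Ht].
  - now apply tau1_derivable.
Qed.

Lemma Psi_i_spec i x t :
  derivable_pt_lim (fun s => Psi (setc x i s) t) (x i) (Psi_i i x t).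
Proof. apply derivable_pt_lim_scal, mom_derivable_setc; auto. Qed.

Lemma Psi_ii_spec i x t :
  derivable_pt_lim (fun s => Psi_i i (setc x i s) t) (x i) (Psi_ii i x t).
Proof. apply derivable_pt_lim_scal, mom_derivable_setc; auto. Qed.

(* By the wave equation, the Laplacian of psi is the average of v_rr. *)
Lemma Psi_laplacian x t : fsum n (fun i => Psi_ii i x t) = 3/2 * mom (vrr x) 0 (tau t).
Proof.
  unfold Psi_ii. rewrite fsum_mull, mom_fsum by (intros; apply jcont_continuity, Hd2_c).
  f_equal. unfold mom. apply RInt_ext. intros s _. now rewrite Hwave.
Qed.

Lemma Psi_equation x t : 0 < t ->
  Psi_tt x t - Rpower t (-4/3) * fsum n (fun i => Psi_ii i x t) + 2 / t * Psi_t x t = 0.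
Proof.
  intros Ht. pose (u := Rpower t (1/3)).
  assert (Hu : 0 < u) by (unfold u, Rpower; apply exp_pos).
  assert (Htau : tau t = 3 * u) by reflexivity.
  assert (Htau1 : tau1 t = / u ^ 2).
  { unfold tau1, u. rewrite <- Rpower_neg_thirds by exact Ht. f_equal. simpl. field. }
  assert (Htau2 : tau2 t = -2/3 * / u ^ 5).
  { unfold tau2, u. rewrite <- Rpower_neg_thirds by exact Ht. do 2 f_equal. simpl. field. }
  assert (Hpow : Rpower t (-4/3) = / u ^ 4).
  { unfold u. rewrite <- Rpower_neg_thirds by exact Ht. f_equal. simpl. field. }
  assert (Hibp := mom_ibp (vr x) (vrr x) (tau t) (Hvr_r x)
                    (jcont_continuity _ x Hvrr_c) (Hvr_0 x)).
  rewrite Psi_laplacian. unfold Psi_tt, Psi_t.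
  rewrite Htau1, Htau2, Hpow, Htau. rewrite Htau in Hibp.
  replace (2 / t) with (2 / u ^ 3) by (unfold u; now rewrite cbrt_cube).
  now apply wave_average_algebra.
Qed.

(* t psi -> 0: t psi = (tau/3)^3 * 3/2 mom (v x) 0 tau. *)
Lemma Psi_limit_0 x : limit1_in (fun t => t * Psi x t) (fun t => 0 < t) 0 0.
Proof.
  apply (limit_through_tau _ (fun T => (T / 3) ^ 3 * (3/2 * mom (v x) 0 T))).
  - apply continuity_pt_mult; [reg |].
    apply continuity_pt_scal, (mom_continuity _ (vr x));
      [apply Hv_r | apply jcont_continuity, Hvr_c].
  - simpl. field.
  - intros t Ht. unfold Psi, tau.
    replace (3 * Rpower t (1/3) / 3) with (Rpower t (1/3)) by field.
    now rewrite cbrt_cube.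
Qed.

(* t psi_t + psi -> v(x,0): using t tau1 t = tau t / 3, it is a continuous
   function of tau whose value at 0 is 3/2 v(x,0) int_0^1 (1 - s^2) ds. *)
Lemma Psi_limit_1 x :
  limit1_in (fun t => t * Psi_t x t + Psi x t) (fun t => 0 < t) (v x 0) 0.
Proof.
  apply (limit_through_tau _ (fun T => T / 2 * mom (vr x) 1 T + 3/2 * mom (v x) 0 T)).
  - apply continuity_pt_plus; apply continuity_pt_mult; try reg.
    + apply (mom_continuity _ (vrr x)); [apply Hvr_r | apply jcont_continuity, Hvrr_c].
    + apply (mom_continuity _ (vr x)); [apply Hv_r | apply jcont_continuity, Hvr_c].
  - rewrite !mom_at_0, RInt_wgt_0. field.
  - intros t Ht. unfold Psi_t, Psi.
    replace (t * (3/2 * (mom (vr x) 1 (tau t) * tau1 t)))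
      with (3/2 * (t * tau1 t) * mom (vr x) 1 (tau t)) by ring.
    rewrite t_tau1 by exact Ht. field.
Qed.

End WaveAverage.

Theorem corollary2p6 (n : nat) (phi1 : Rn n -> R) (v : Rn n -> R -> R)
  (psi : Rn n -> R -> R) :
  C0k (Nat.div n 2 + 2) phi1 ->
  is_wave_solution phi1 v ->
  (forall x t, 0 < t ->
     exists pr : Riemann_integrable
                   (fun s => v x (3 * Rpower t (1/3) * s) * (1 - s ^ 2)) 0 1,
       psi x t = 3 / 2 * RiemannInt pr) ->
  exists (psit psitt : Rn n -> R -> R) (d1 d2 : Fin.t n -> Rn n -> R -> R),
    (forall x t, 0 < t ->
       derivable_pt_lim (fun s => psi x s) t (psit x t) /\
       derivable_pt_lim (fun s => psit x s) t (psitt x t) /\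
       (forall i,
          derivable_pt_lim (fun s => psi (setc x i s) t) (x i) (d1 i x t) /\
          derivable_pt_lim (fun s => d1 i (setc x i s) t) (x i) (d2 i x t)) /\
       psitt x t - Rpower t (-4/3) * fsum n (fun i => d2 i x t)
         + 2 / t * psit x t = 0) /\
    (forall x, limit1_in (fun t => t * psi x t) (fun t => 0 < t) 0 0) /\
    (forall x, limit1_in (fun t => t * psit x t + psi x t) (fun t => 0 < t)
                 (phi1 x) 0).
Proof.
  intros _ Hw Hpsi.
  assert (Hv0 : forall x, v x 0 = phi1 x) by apply Hw.
  destruct (wave_solution_regular phi1 v Hw)
    as (vr & vrr & d1 & d2 & [Hv_r Hvr_r Hv_i Hd1_i Hwave Hvr_0 Hv_c Hvr_c Hvrr_c Hd1_c Hd2_c]).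
  assert (Hpsi_Psi : forall x t, 0 < t -> psi x t = Psi v x t).
  { intros x t Ht. destruct (Hpsi x t Ht) as [pr ->]. rewrite <- RInt_Reals.
    unfold Psi, mom, wgt, tau. f_equal. apply RInt_ext. intros s _. simpl. ring. }
  exists (Psi_t vr), (Psi_tt vr vrr), (Psi_i d1), (Psi_ii d2).
  split; [| split].
  - intros x t Ht. split; [| split; [| split]].
    + apply (derivable_pt_lim_ext_pos _ (Psi v x)); [intros; now apply Hpsi_Psi | exact Ht |].
      now apply Psi_t_spec.
    + now apply Psi_tt_spec.
    + intros i. split; [| now apply Psi_ii_spec].
      replace (fun s => psi (setc x i s) t) with (fun s => Psi v (setc x i s) t)
        by (apply functional_extensionality; intros; now rewrite Hpsi_Psi).
      now apply Psi_i_spec.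
    + now apply Psi_equation.
  - intros x. apply (limit1_in_ext_pos _ (fun t => t * Psi v x t));
      [intros; now rewrite Hpsi_Psi | now apply (Psi_limit_0 v vr)].
  - intros x. rewrite <- Hv0.
    apply (limit1_in_ext_pos _ (fun t => t * Psi_t vr x t + Psi v x t));
      [intros; now rewrite Hpsi_Psi | now apply (Psi_limit_1 v vr vrr)].
Qed.
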